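(* Let $(a_n)$, $(b_n)$ be positive sequences and set $p_n=a_n n^{-1}\log n$ and $q_n=b_n n^{-1}\log n$. Suppose there is a constant $C$ such that $C^{-1}\le a_n,b_n\le C$ for all but finitely many $n$. Then $P(n,p_n,q_n)=o(n^{-1})$ if and only if \[ (a_n+b_n-2\sqrt{a_nb_n}-1)\log n+\tfrac12\log\log n\to\infty . \]
   Context: For integers $m,n\ge0$ and $p,q\in[0,1]$, $P(m,n,p,q)=\Pr(Y\ge X)$ where $X\sim\mathrm{Binom}(m,\max\{p,q\})$ and $Y\sim\mathrm{Binom}(n,\min\{p,q\})$ are independent; $P(n,p,q)=P(n,n,p,q)$. *)

From Stdlib Require Import Reals Lra Arith.
From Coquelicot Require Import Coquelicot.
Open Scope R_scope.

Definition binom_pmf (m i : nat) (r : R) : R :=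
  Binomial.C m i * r ^ i * (1 - r) ^ (m - i).

(* Pwin m n p q = Pr(Y >= X), X ~ Bin(m, max p q), Y ~ Bin(n, min p q),
   independent:  sum over i in 0..m, j in 0..n with i <= j of the product
   of the two pmfs. *)
Definition Pwin (m n : nat) (p q : R) : R :=
  sum_f_R0 (fun i =>
    sum_f_R0 (fun j =>
      if Nat.leb i j
      then binom_pmf m i (Rmax p q) * binom_pmf n j (Rmin p q)
      else 0) n) m.

Definition Pdiag (n : nat) (p q : R) : R := Pwin n n p q.

(* Write [L = ln n] and let [sh ^ 2], [sl ^ 2] be the larger and the smaller of [a n],
   [b n], so that the two success probabilities are [sh ^ 2 L / n] and [sl ^ 2 L / n] and
   both binomial laws are close to Poisson laws, of means [sh ^ 2 L] and [sl ^ 2 L].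
   Lower bound: the diagonal events [X = Y = k], for [k] in a window of width [sqrt z]
   above [z = sh sl L], already have total probability [>= c e^(-(sh - sl)^2 L) / sqrt L],
   because the Poisson weights [z ^ k / k!] there are of order [e^z / sqrt z].
   Upper bound: rescaling both Poisson laws to the common parameter [z] makes
   [P(X = i, Y = j)] decay geometrically in [j - i], with ratio about [sl / sh]; once
   [sh - sl >= 1/2] this gives [P(Y >= X) <= C e^(-(sh - sl)^2 L) / sqrt L].
   As [(sh - sl)^2 = a + b - 2 sqrt (a b)], [n P] is then within constant factors of
   [exp (-Q n)], with [Q n] the quantity in the statement, and [n P -> 0] iff [Q n -> oo]. *)

From Stdlib Require Import Reals Lra Lia.
From Coquelicot Require Import Coquelicot.
Open Scope R_scope.

Lemma exp_le_compat x y : x <= y -> exp x <= exp y.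
Proof. intros [h | ->]; [left; now apply exp_increasing | lra]. Qed.

Lemma exp_pow x n : exp x ^ n = exp (INR n * x).
Proof.
  induction n as [| n IH]; [simpl; now rewrite Rmult_0_l, exp_0 |].
  rewrite S_INR. simpl pow. rewrite IH, <- exp_plus. f_equal. ring.
Qed.

Lemma inv_exp1_ge_third : / 3 <= / exp 1.
Proof.
  apply Rinv_le_contravar; [apply exp_pos | apply exp_le_3].
Qed.

Lemma exp_le_one_add_twice x : 0 <= x <= 1 / 2 -> exp x <= 1 + 2 * x.
Proof.
  intros hx. pose proof (exp_ineq1_le (- x)) as hinv. rewrite exp_Ropp in hinv.
  pose proof (exp_pos x).
  assert (h : exp x * (1 - x) <= 1).
  { apply Rmult_le_reg_r with (/ exp x); [now apply Rinv_0_lt_compat |].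
    rewrite Rmult_comm, <- Rmult_assoc, Rinv_l, Rmult_1_l, Rmult_1_l by lra. lra. }
  nra.
Qed.

Lemma inv_exp1_le_pow_ratio w t : 0 < w -> INR t * INR t <= w ->
  / exp 1 <= (w / (w + INR t)) ^ t.
Proof.
  intros hw ht. pose proof (pos_INR t).
  assert (hx : 0 <= INR t / w) by (apply Rdiv_le_0_compat; lra).
  replace (w / (w + INR t)) with (/ (1 + INR t / w)) by (field; lra).
  rewrite pow_inv.
  apply Rinv_le_contravar; [apply pow_lt; lra |].
  apply Rle_trans with (exp (INR t / w) ^ t); [apply pow_incr; split; [lra | apply exp_ineq1_le] |].
  rewrite exp_pow. apply exp_le_compat.
  apply Rmult_le_reg_r with w; [lra |].
  unfold Rdiv. rewrite Rmult_assoc, Rmult_assoc, Rinv_l; lra.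
Qed.

Lemma ln_le_sub_1 x : 0 < x -> ln x <= x - 1.
Proof. intros hx. pose proof (exp_ineq1_le (ln x)) as h. rewrite exp_ln in h; lra. Qed.

Lemma ln_sqrt x : 0 < x -> ln (sqrt x) = ln x / 2.
Proof.
  intros hx. assert (0 < sqrt x) by now apply sqrt_lt_R0.
  rewrite <- (sqrt_sqrt x) at 2 by lra. rewrite ln_mult by lra. field.
Qed.

Lemma ln_sq_le x : 1 <= x -> ln x * ln x <= 16 * sqrt x.
Proof.
  intros hx.
  assert (h1 : 0 < sqrt x) by (apply sqrt_lt_R0; lra).
  assert (h2 : 0 < sqrt (sqrt x)) by now apply sqrt_lt_R0.
  assert (e : ln x = 4 * ln (sqrt (sqrt x))) by (rewrite !ln_sqrt by lra; field).
  pose proof (ln_le_sub_1 _ h2).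
  assert (0 <= ln x) by (rewrite <- ln_1; apply ln_le; lra).
  assert (sqrt (sqrt x) * sqrt (sqrt x) = sqrt x) by (apply sqrt_sqrt; lra).
  nra.
Qed.

Lemma bernoulli_ineq x k : 0 <= x <= 1 -> 1 - INR k * x <= (1 - x) ^ k.
Proof.
  intros hx. induction k as [| k IH]; [simpl; lra |].
  rewrite S_INR. simpl pow. pose proof (pos_INR k).
  assert (0 <= (1 - x) ^ k) by (apply pow_le; lra).
  assert (0 <= INR k * x * x) by (apply Rmult_le_pos; [apply Rmult_le_pos |]; lra).
  nra.
Qed.

Lemma sum_f_R0_term_le (f : nat -> R) n k : (forall i, 0 <= f i) -> (k <= n)%nat ->
  f k <= sum_f_R0 f n.
Proof.
  intros hf hk. induction hk as [| n hkn IH].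
  - destruct k as [| k]; simpl; [lra |].
    pose proof (cond_pos_sum f k hf). lra.
  - simpl. specialize (hf (S n)). lra.
Qed.

Lemma sum_f_R0_le_N (f : nat -> R) n N : (forall i, 0 <= f i) -> (n <= N)%nat ->
  sum_f_R0 f n <= sum_f_R0 f N.
Proof.
  intros hf hnN. induction hnN as [| N hnN IH]; simpl; [lra |].
  specialize (hf (S N)). lra.
Qed.

Lemma sum_f_R0_shift_le (f : nat -> R) m r : (forall i, 0 <= f i) ->
  sum_f_R0 (fun t => f (m + t)%nat) r <= sum_f_R0 f (m + r).
Proof.
  intros hf. induction r as [| r IH].
  - simpl. rewrite Nat.add_0_r. now apply sum_f_R0_term_le.
  - rewrite Nat.add_succ_r. simpl. rewrite Nat.add_succ_r. lra.
Qed.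

Lemma sum_f_R0_ge_const (f : nat -> R) c r : (forall t, (t <= r)%nat -> c <= f t) ->
  INR (S r) * c <= sum_f_R0 f r.
Proof.
  intros hf. induction r as [| r IH]; [simpl; specialize (hf 0%nat (le_n _)); lra |].
  rewrite tech5, S_INR. specialize (IH (fun t ht => hf t (le_S _ _ ht))).
  specialize (hf (S r) (le_n _)). lra.
Qed.

Lemma sum_f_R0_mult_l (f : nat -> R) c N : sum_f_R0 (fun i => c * f i) N = c * sum_f_R0 f N.
Proof. rewrite scal_sum. apply sum_eq. intros; ring. Qed.

Lemma sum_geometric_from_le r i n : 0 <= r < 1 ->
  sum_f_R0 (fun j => if Nat.leb i j then r ^ (j - i) else 0) n <= / (1 - r).
Proof.
  intros hr.
  assert (hsum : sum_f_R0 (fun j => if Nat.leb i j then r ^ (j - i) else 0) n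
                 = (1 - r ^ (S n - i)) / (1 - r)).
  { induction n as [| n IH].
    - destruct i; simpl; field; lra.
    - rewrite tech5, IH. destruct (Nat.leb i (S n)) eqn:E.
      + apply Nat.leb_le in E. replace (S (S n) - i)%nat with (S (S n - i)) by lia.
        simpl pow. field. lra.
      + apply Nat.leb_gt in E. replace (S (S n) - i)%nat with 0%nat by lia.
        replace (S n - i)%nat with 0%nat by lia. simpl. field. lra. }
  rewrite hsum. unfold Rdiv. rewrite <- (Rmult_1_l (/ (1 - r))) at 2.
  apply Rmult_le_compat_r; [left; apply Rinv_0_lt_compat; lra |].
  assert (0 <= r ^ (S n - i)) by (apply pow_le; lra). lra.
Qed.

Lemma sum_indicator_le z c N : 0 <= c ->
  sum_f_R0 (fun k => if Rle_dec (Rabs (INR k - z)) c then 1 else 0) N <= 2 * c + 1.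
Proof.
  intros hc.
  enough (h : sum_f_R0 (fun k => if Rle_dec (Rabs (INR k - z)) c then 1 else 0) N
              <= Rmax 0 (Rmin (INR N) (z + c) - (z - c) + 1)).
  { revert h. unfold Rmin, Rmax. repeat destruct Rle_dec; lra. }
  induction N as [| N IH].
  - simpl. destruct Rle_dec as [h | h]; rewrite ?Rabs_le_between in h;
      unfold Rmin, Rmax; repeat destruct Rle_dec; lra.
  - rewrite tech5, S_INR. destruct Rle_dec as [h | h]; rewrite ?Rabs_le_between in h;
      revert IH; unfold Rmin, Rmax; repeat destruct Rle_dec; lra.
Qed.

(** * Poisson weights *)

Definition poisson_weight (w : R) (k : nat) : R := w ^ k / INR (Factorial.fact k).

Lemma poisson_weight_S w k : poisson_weight w (S k) = poisson_weight w k * (w / INR (S k)).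
Proof.
  unfold poisson_weight. rewrite fact_simpl, mult_INR. simpl pow.
  pose proof (INR_fact_lt_0 k). pose proof (lt_0_INR (S k) (Nat.lt_0_succ k)).
  field. lra.
Qed.

Lemma poisson_weight_ge_0 w k : 0 <= w -> 0 <= poisson_weight w k.
Proof.
  intros. unfold poisson_weight. apply Rdiv_le_0_compat.
  - now apply pow_le.
  - apply INR_fact_lt_0.
Qed.

Lemma poisson_weight_S_ge w k : INR (S k) <= w ->
  poisson_weight w k <= poisson_weight w (S k).
Proof.
  intros hk. pose proof (lt_0_INR (S k) (Nat.lt_0_succ k)).
  rewrite poisson_weight_S. rewrite <- (Rmult_1_r (poisson_weight w k)) at 1.
  apply Rmult_le_compat_l; [apply poisson_weight_ge_0; lra |].
  apply Rmult_le_reg_r with (INR (S k)); [lra |].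
  unfold Rdiv. rewrite Rmult_assoc, Rinv_l; lra.
Qed.

Lemma poisson_weight_S_le w k : 0 <= w -> w <= INR (S k) ->
  poisson_weight w (S k) <= poisson_weight w k.
Proof.
  intros hw hk. pose proof (lt_0_INR (S k) (Nat.lt_0_succ k)).
  rewrite poisson_weight_S. rewrite <- (Rmult_1_r (poisson_weight w k)) at 2.
  apply Rmult_le_compat_l; [now apply poisson_weight_ge_0 |].
  apply Rmult_le_reg_r with (INR (S k)); [lra |].
  unfold Rdiv. rewrite Rmult_assoc, Rinv_l; lra.
Qed.

Lemma poisson_weight_le_mode w m j : 0 <= w -> INR m <= w < INR m + 1 ->
  poisson_weight w j <= poisson_weight w m.
Proof.
  intros hw [hmw hwm].
  destruct (Nat.le_gt_cases j m) as [hj | hj].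
  - clear hwm. induction hj as [| m hjm IH]; [lra |].
    apply Rle_trans with (poisson_weight w m).
    + apply IH. rewrite S_INR in hmw. lra.
    + now apply poisson_weight_S_ge.
  - induction hj as [| j hmj IH].
    + apply poisson_weight_S_le; rewrite ?S_INR; lra.
    + apply Rle_trans with (poisson_weight w j); [| exact IH].
      apply poisson_weight_S_le; [lra |].
      assert (INR (S m) <= INR (S j)) by (apply le_INR; lia). rewrite !S_INR in *. lra.
Qed.

Lemma poisson_weight_shift_ge w m t : 0 < w -> INR m <= w ->
  poisson_weight w m * (w / (w + INR t)) ^ t <= poisson_weight w (m + t).
Proof.
  intros hw hm. induction t as [| t IH].
  - rewrite Nat.add_0_r. simpl. lra.
  - rewrite Nat.add_succ_r, poisson_weight_S, !S_INR, plus_INR. simpl pow.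
    pose proof (pos_INR t). pose proof (pos_INR m).
    set (c := w / (w + (INR t + 1))).
    assert (hc : 0 <= c <= w / (w + INR t)).
    { split; [apply Rdiv_le_0_compat; lra |].
      apply Rmult_le_compat_l; [lra | apply Rinv_le_contravar; lra]. }
    assert (hcm : c <= w / (INR m + INR t + 1)).
    { apply Rmult_le_compat_l; [lra | apply Rinv_le_contravar; lra]. }
    assert (hct : 0 <= c ^ t <= (w / (w + INR t)) ^ t).
    { split; [apply pow_le; lra | apply pow_incr; lra]. }
    assert (hpm : 0 <= poisson_weight w m) by (apply poisson_weight_ge_0; lra).
    apply Rle_trans with (poisson_weight w m * (w / (w + INR t)) ^ t * c).
    + rewrite <- Rmult_assoc, (Rmult_comm (poisson_weight w m) c), Rmult_assoc,
        (Rmult_comm c). apply Rmult_le_compat_r; [lra |].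
      now apply Rmult_le_compat_l.
    + apply Rmult_le_compat; try lra.
      apply Rmult_le_pos; [lra | apply pow_le, Rdiv_le_0_compat; lra].
Qed.

Lemma poisson_weight_near_mode w m t : 0 < w -> INR m <= w -> INR t * INR t <= w ->
  poisson_weight w m / exp 1 <= poisson_weight w (m + t).
Proof.
  intros hw hm ht. eapply Rle_trans; [| now apply poisson_weight_shift_ge].
  apply Rmult_le_compat_l; [apply poisson_weight_ge_0; lra |].
  now apply inv_exp1_le_pow_ratio.
Qed.

(* The [sqrt w] weights to the right of the mode are all comparable to the mode
   and together at most [exp w], so the mode is [O(exp w / sqrt w)]. *)
Lemma poisson_weight_le_exp_div_sqrt w j : 1 <= w -> poisson_weight w j <= 3 * exp w / sqrt w.
Proof.
  intros hw.
  destruct (nfloor_ex w ltac:(lra)) as [m hm].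
  assert (hs : 1 <= sqrt w) by (rewrite <- sqrt_1; now apply sqrt_le_1_alt).
  assert (hss : sqrt w * sqrt w = w) by (apply sqrt_sqrt; lra).
  destruct (nfloor_ex (sqrt w) ltac:(lra)) as [r hr].
  assert (hwin : forall t, (t <= r)%nat ->
    poisson_weight w m / exp 1 <= poisson_weight w (m + t)).
  { intros t ht. apply poisson_weight_near_mode; [lra | lra |].
    assert (INR t <= sqrt w) by (apply Rle_trans with (INR r); [now apply le_INR | lra]).
    pose proof (pos_INR t). rewrite <- hss. nra. }
  assert (hsum : INR (S r) * (poisson_weight w m / exp 1) <= exp w).
  { apply Rle_trans with (sum_f_R0 (fun t => poisson_weight w (m + t)) r);
      [now apply sum_f_R0_ge_const |].
    eapply Rle_trans; [apply sum_f_R0_shift_le; intros; apply poisson_weight_ge_0; lra |].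
    apply exp_ge_taylor; lra. }
  rewrite S_INR in hsum. pose proof inv_exp1_ge_third.
  pose proof (poisson_weight_ge_0 w m ltac:(lra)).
  apply Rle_trans with (poisson_weight w m); [now apply poisson_weight_le_mode; lra |].
  apply Rmult_le_reg_r with (sqrt w); [lra |].
  unfold Rdiv. rewrite Rmult_assoc, Rinv_l by lra.
  unfold Rdiv in hsum.
  assert (sqrt w * (poisson_weight w m * / exp 1) <= exp w).
  { eapply Rle_trans; [| exact hsum].
    apply Rmult_le_compat_r; [| lra].
    apply Rmult_le_pos; [lra | left; apply Rinv_0_lt_compat, exp_pos]. }
  assert (0 <= sqrt w * poisson_weight w m * (/ exp 1 - / 3)) by (apply Rmult_le_pos; nra).
  nra.
Qed.

Lemma poisson_partial_sums_cv z :
  is_lim_seq (fun N => sum_f_R0 (poisson_weight z) N) (exp z).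
Proof.
  apply is_lim_seq_ext with (fun N => sum_f_R0 (fun i => / INR (Factorial.fact i) * z ^ i) N).
  - intros N. apply sum_eq. intros i _. unfold poisson_weight, Rdiv. ring.
  - apply is_lim_seq_Reals, (proj2_sig (exist_exp z)).
Qed.

Lemma exp_le_of_partial_sums_le z B : 0 <= z ->
  (forall N, z <= INR N -> sum_f_R0 (poisson_weight z) N <= B) -> exp z <= B.
Proof.
  intros hz hB. destruct (nfloor_ex z hz) as [N0 hN0].
  assert (hall : forall N, sum_f_R0 (poisson_weight z) N <= B).
  { intros N. apply Rle_trans with (sum_f_R0 (poisson_weight z) (Nat.max N (S N0))).
    - apply sum_f_R0_le_N; [intros; now apply poisson_weight_ge_0 | lia].
    - apply hB. apply Rle_trans with (INR (S N0)); [rewrite S_INR; lra | apply le_INR; lia]. }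
  exact (is_lim_seq_le _ _ _ _ hall (poisson_partial_sums_cv z) (is_lim_seq_const B)).
Qed.

Lemma poisson_second_moment z N :
  sum_f_R0 (fun k => (INR k - z) ^ 2 * poisson_weight z k) N =
  z * sum_f_R0 (poisson_weight z) N + z * poisson_weight z N * (z - INR N - 1).
Proof.
  induction N as [| N IH].
  - unfold poisson_weight. simpl. field.
  - rewrite !tech5, IH, poisson_weight_S, S_INR.
    pose proof (lt_0_INR (S N) (Nat.lt_0_succ N)). rewrite S_INR in *.
    field. lra.
Qed.

(* Chebyshev: weights with [|k - z| > 2 sqrt z] carry at most a quarter of the mass,
   and there are at most [4 sqrt z + 1] others, each bounded by the mode. *)
Lemma exp_le_poisson_mode z m : 1 <= z -> INR m <= z < INR m + 1 ->
  exp z <= 7 * sqrt z * poisson_weight z m.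
Proof.
  intros hz hm.
  assert (hs : 1 <= sqrt z) by (rewrite <- sqrt_1; now apply sqrt_le_1_alt).
  assert (hss : sqrt z * sqrt z = z) by (apply sqrt_sqrt; lra).
  pose proof (poisson_weight_ge_0 z m ltac:(lra)).
  set (ind k := if Rle_dec (Rabs (INR k - z)) (2 * sqrt z) then 1 else 0).
  apply exp_le_of_partial_sums_le; [lra |]. intros N hN.
  assert (hsplit : sum_f_R0 (poisson_weight z) N <=
    poisson_weight z m * sum_f_R0 ind N
    + / (4 * z) * sum_f_R0 (fun k => (INR k - z) ^ 2 * poisson_weight z k) N).
  { rewrite !scal_sum, <- sum_plus. apply sum_Rle. intros k _. unfold ind.
    pose proof (poisson_weight_ge_0 z k ltac:(lra)).
    pose proof (poisson_weight_le_mode z m k ltac:(lra) hm).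
    assert (0 <= (INR k - z) ^ 2 * poisson_weight z k * / (4 * z)).
    { apply Rmult_le_pos; [apply Rmult_le_pos; [apply pow2_ge_0 | lra] |].
      left. apply Rinv_0_lt_compat. lra. }
    destruct Rle_dec as [h | h]; [lra |].
    assert (4 * z < (INR k - z) ^ 2).
    { apply Rnot_le_lt in h. rewrite <- (pow2_abs (INR k - z)). simpl. nra. }
    rewrite Rmult_0_l, Rplus_0_l.
    apply Rmult_le_reg_r with (4 * z); [lra |].
    rewrite Rmult_assoc, Rinv_l by lra. nra. }
  rewrite poisson_second_moment in hsplit.
  pose proof (sum_indicator_le z (2 * sqrt z) N ltac:(lra)).
  pose proof (poisson_weight_ge_0 z N ltac:(lra)).
  assert (z * poisson_weight z N * (z - INR N - 1) <= 0).
  { apply Rmult_le_0_l; [apply Rmult_le_pos |]; lra. }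
  set (S := sum_f_R0 (poisson_weight z) N) in *.
  assert (/ (4 * z) * (z * S + z * poisson_weight z N * (z - INR N - 1)) <= S / 4).
  { apply Rmult_le_reg_l with (4 * z); [lra |].
    rewrite <- Rmult_assoc, Rinv_r by lra. field_simplify; lra. }
  assert (poisson_weight z m * sum_f_R0 ind N <= poisson_weight z m * (2 * (2 * sqrt z) + 1))
    by now apply Rmult_le_compat_l.
  nra.
Qed.

Lemma poisson_window_sq_ge z m r : 1 <= z -> INR m <= z < INR m + 1 ->
  INR r <= sqrt z < INR r + 1 ->
  exp z ^ 2 / (441 * sqrt z) <= sum_f_R0 (fun t => poisson_weight z (m + t) ^ 2) r.
Proof.
  intros hz hm hr.
  assert (hs : 1 <= sqrt z) by (rewrite <- sqrt_1; now apply sqrt_le_1_alt).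
  assert (hss : sqrt z * sqrt z = z) by (apply sqrt_sqrt; lra).
  pose proof (exp_le_poisson_mode z m hz hm). pose proof inv_exp1_ge_third.
  pose proof (exp_pos z).
  set (c := exp z / (21 * sqrt z)).
  assert (hc : 0 <= c) by (unfold c; apply Rdiv_le_0_compat; lra).
  assert (hcm : c <= poisson_weight z m / exp 1).
  { unfold c, Rdiv. apply Rle_trans with (7 * sqrt z * poisson_weight z m * / (21 * sqrt z)).
    - apply Rmult_le_compat_r; [left; apply Rinv_0_lt_compat |]; lra.
    - replace (7 * sqrt z * poisson_weight z m * / (21 * sqrt z))
        with (poisson_weight z m * / 3) by (field; lra).
      apply Rmult_le_compat_l; [apply poisson_weight_ge_0 |]; lra. }
  assert (hwin : forall t, (t <= r)%nat -> c ^ 2 <= poisson_weight z (m + t) ^ 2).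
  { intros t ht. apply pow_incr. split; [exact hc |].
    eapply Rle_trans; [exact hcm |]. apply poisson_weight_near_mode; [lra | lra |].
    assert (INR t <= sqrt z) by (apply Rle_trans with (INR r); [now apply le_INR | lra]).
    pose proof (pos_INR t). rewrite <- hss. nra. }
  eapply Rle_trans;
    [| exact (sum_f_R0_ge_const (fun t => poisson_weight z (m + t) ^ 2) _ r hwin)].
  rewrite S_INR.
  replace (exp z ^ 2 / (441 * sqrt z)) with (sqrt z * c ^ 2) by (unfold c; field; lra).
  apply Rmult_le_compat_r; [apply pow2_ge_0 | lra].
Qed.

Lemma poisson_weight_tilt w s i j : 0 < s -> (i <= j)%nat ->
  poisson_weight (w * s) i * poisson_weight (w / s) j
  = poisson_weight w i * poisson_weight w j * (/ s) ^ (j - i).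
Proof.
  intros hs hij. unfold poisson_weight.
  destruct (Nat.le_exists_sub i j hij) as [d [-> _]].
  replace (d + i - i)%nat with d by lia. rewrite (Nat.add_comm d i).
  unfold Rdiv. rewrite !Rpow_mult_distr, !pow_add, !pow_inv.
  pose proof (INR_fact_lt_0 i). pose proof (INR_fact_lt_0 (i + d)).
  assert (0 < s ^ i) by (apply pow_lt; lra). assert (0 < s ^ d) by (apply pow_lt; lra).
  field. repeat split; lra.
Qed.

(** * Binomial probabilities *)

Lemma binomial_ge_0 n i : 0 <= Binomial.C n i.
Proof.
  unfold Binomial.C. apply Rdiv_le_0_compat; [left; apply INR_fact_lt_0 |].
  apply Rmult_lt_0_compat; apply INR_fact_lt_0.
Qed.

Lemma binomial_le_poisson_weight n i : (i <= n)%nat ->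
  Binomial.C n i <= poisson_weight (INR n) i.
Proof.
  induction i as [| i IH]; intros hi.
  - rewrite C_n_0. unfold poisson_weight. simpl. lra.
  - rewrite pascal_step3, poisson_weight_S, minus_INR by lia.
    pose proof (lt_0_INR (S i) (Nat.lt_0_succ i)). pose proof (pos_INR i).
    rewrite Rmult_comm. apply Rmult_le_compat; [apply binomial_ge_0 | | apply IH; lia |].
    + apply Rdiv_le_0_compat; [| lra]. assert (INR i <= INR n) by (apply le_INR; lia). lra.
    + apply Rmult_le_compat_r; [left; now apply Rinv_0_lt_compat | lra].
Qed.

Lemma binomial_ge_poisson_weight n i : (i <= n)%nat ->
  poisson_weight (INR n - INR i) i <= Binomial.C n i.
Proof.
  induction i as [| i IH]; intros hi.
  - rewrite C_n_0. unfold poisson_weight. simpl. lra.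
  - rewrite pascal_step3, poisson_weight_S, minus_INR by lia.
    pose proof (lt_0_INR (S i) (Nat.lt_0_succ i)).
    assert (INR (S i) <= INR n) by (apply le_INR; lia). rewrite S_INR in *.
    rewrite (Rmult_comm (_ / _) (Binomial.C n i)).
    apply Rmult_le_compat; [apply poisson_weight_ge_0; lra | apply Rdiv_le_0_compat; lra | |].
    + apply Rle_trans with (poisson_weight (INR n - INR i) i); [| apply IH; lia].
      unfold poisson_weight. apply Rmult_le_compat_r;
        [left; apply Rinv_0_lt_compat, INR_fact_lt_0 | apply pow_incr; lra].
    + apply Rmult_le_compat_r; [left; apply Rinv_0_lt_compat |]; lra.
Qed.

Lemma binom_pmf_ge_0 n i r : 0 <= r <= 1 -> 0 <= binom_pmf n i r.
Proof.
  intros hr. unfold binom_pmf.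
  apply Rmult_le_pos; [apply Rmult_le_pos; [apply binomial_ge_0 |] |]; apply pow_le; lra.
Qed.

Lemma binom_pmf_le_poisson n i r : (i <= n)%nat -> 0 <= r <= 1 ->
  binom_pmf n i r <= exp (- (INR n * r)) * poisson_weight (INR n * r * exp r) i.
Proof.
  intros hi hr. unfold binom_pmf.
  assert (h1 : (1 - r) ^ (n - i) <= exp ((INR n - INR i) * - r)).
  { rewrite <- minus_INR, <- exp_pow by exact hi.
    apply pow_incr. pose proof (exp_ineq1_le (- r)). lra. }
  apply Rle_trans with (poisson_weight (INR n) i * r ^ i * exp ((INR n - INR i) * - r)).
  - apply Rmult_le_compat; [| apply pow_le; lra | | exact h1].
    + apply Rmult_le_pos; [apply binomial_ge_0 | apply pow_le; lra].
    + apply Rmult_le_compat_r; [apply pow_le; lra | now apply binomial_le_poisson_weight].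
  - right. unfold poisson_weight. rewrite !Rpow_mult_distr, exp_pow.
    replace ((INR n - INR i) * - r) with (- (INR n * r) + INR i * r) by ring.
    rewrite exp_plus. pose proof (INR_fact_lt_0 i). field. lra.
Qed.

Lemma binomial_ge_poisson_weight_mul n i : (0 < n)%nat -> (i <= n)%nat ->
  poisson_weight (INR n) i * (1 - INR i * INR i / INR n) <= Binomial.C n i.
Proof.
  intros hn hi. pose proof (lt_0_INR n hn). pose proof (pos_INR i).
  assert (hin : INR i <= INR n) by now apply le_INR.
  eapply Rle_trans; [| now apply binomial_ge_poisson_weight].
  unfold poisson_weight.
  replace (INR n - INR i) with (INR n * (1 - INR i / INR n)) by (field; lra).
  rewrite Rpow_mult_distr.
  assert (hx : 0 <= INR i / INR n <= 1).
  { split; [apply Rdiv_le_0_compat; lra |].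
    apply Rmult_le_reg_r with (INR n); [lra |]. unfold Rdiv. rewrite Rmult_assoc, Rinv_l; lra. }
  pose proof (bernoulli_ineq (INR i / INR n) i hx) as hber.
  pose proof (INR_fact_lt_0 i). assert (0 <= INR n ^ i) by (apply pow_le; lra).
  replace (INR n ^ i * (1 - INR i / INR n) ^ i / INR (Factorial.fact i))
    with (INR n ^ i / INR (Factorial.fact i) * (1 - INR i / INR n) ^ i) by (field; lra).
  apply Rmult_le_compat_l; [apply Rdiv_le_0_compat; lra |].
  replace (INR i * INR i / INR n) with (INR i * (INR i / INR n)) by (unfold Rdiv; ring).
  exact hber.
Qed.

Lemma one_sub_pow_ge_exp n r : 0 <= r <= 1 ->
  exp (- (INR n * r)) * (1 - INR n * r ^ 2) <= (1 - r) ^ n.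
Proof.
  intros hr.
  assert (hb : 1 - INR n * r ^ 2 <= ((1 - r) * exp r) ^ n).
  { apply Rle_trans with ((1 - r ^ 2) ^ n).
    - apply bernoulli_ineq. simpl. nra.
    - apply pow_incr. pose proof (exp_ineq1_le r). simpl. nra. }
  rewrite Rpow_mult_distr, exp_pow in hb.
  pose proof (exp_pos (INR n * r)).
  rewrite exp_Ropp. apply Rmult_le_reg_l with (exp (INR n * r)); [lra |].
  rewrite <- Rmult_assoc, Rinv_r by lra. lra.
Qed.

Lemma binom_pmf_ge_poisson n i r : (0 < n)%nat -> (i <= n)%nat -> 0 <= r <= 1 ->
  INR i * INR i <= INR n / 4 -> INR n * r ^ 2 <= / 4 ->
  exp (- (INR n * r)) * poisson_weight (INR n * r) i / 2 <= binom_pmf n i r.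
Proof.
  intros hn hi hr hii hnr. unfold binom_pmf.
  pose proof (lt_0_INR n hn).
  set (X := 1 - INR i * INR i / INR n). set (Y := 1 - INR n * r ^ 2).
  assert (hX : 3 / 4 <= X).
  { enough (INR i * INR i / INR n <= / 4) by (unfold X; lra).
    apply Rmult_le_reg_r with (INR n); [lra |]. unfold Rdiv. rewrite Rmult_assoc, Rinv_l; lra. }
  assert (hY : 3 / 4 <= Y) by (unfold Y; lra).
  assert (hpow : exp (- (INR n * r)) * Y <= (1 - r) ^ (n - i)).
  { eapply Rle_trans; [now apply one_sub_pow_ge_exp |].
    replace n with ((n - i) + i)%nat at 1 by lia. rewrite pow_add.
    rewrite <- (Rmult_1_r ((1 - r) ^ (n - i))) at 2.
    apply Rmult_le_compat_l; [apply pow_le; lra |].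
    pose proof (pow_incr (1 - r) 1 i ltac:(lra)) as hle. now rewrite pow1 in hle. }
  pose proof (binomial_ge_poisson_weight_mul n i hn hi) as hC.
  pose proof (poisson_weight_ge_0 (INR n) i (pos_INR n)).
  pose proof (exp_pos (- (INR n * r))).
  assert (0 <= r ^ i) by (apply pow_le; lra).
  replace (exp (- (INR n * r)) * poisson_weight (INR n * r) i / 2)
    with ((poisson_weight (INR n) i * r ^ i * exp (- (INR n * r))) * / 2)
    by (unfold poisson_weight; rewrite Rpow_mult_distr; field; apply INR_fact_neq_0).
  apply Rle_trans with ((poisson_weight (INR n) i * X) * r ^ i * (exp (- (INR n * r)) * Y)).
  - replace ((poisson_weight (INR n) i * X) * r ^ i * (exp (- (INR n * r)) * Y))
      with ((poisson_weight (INR n) i * r ^ i * exp (- (INR n * r))) * (X * Y)) by ring.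
    apply Rmult_le_compat_l; [apply Rmult_le_pos; [apply Rmult_le_pos |] |]; nra.
  - apply Rmult_le_compat; try assumption.
    + apply Rmult_le_pos; [apply Rmult_le_pos |]; lra.
    + apply Rmult_le_pos; lra.
    + now apply Rmult_le_compat_r.
Qed.

Lemma Pwin_Rmax_Rmin m n p q : Pwin m n p q = Pwin m n (Rmax p q) (Rmin p q).
Proof.
  unfold Pwin.
  replace (Rmax (Rmax p q) (Rmin p q)) with (Rmax p q)
    by (unfold Rmax, Rmin; repeat destruct Rle_dec; lra).
  replace (Rmin (Rmax p q) (Rmin p q)) with (Rmin p q)
    by (unfold Rmax, Rmin; repeat destruct Rle_dec; lra).
  reflexivity.
Qed.

Lemma Pdiag_scaled a b L n : 0 < a -> 0 < b -> 0 < L -> 0 < INR n ->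
  Pdiag n (a * / INR n * L) (b * / INR n * L) =
  Pwin n n (sqrt (Rmax a b) * sqrt (Rmax a b) * L / INR n)
           (sqrt (Rmin a b) * sqrt (Rmin a b) * L / INR n).
Proof.
  intros ha hb hL hn. unfold Pdiag. rewrite Pwin_Rmax_Rmin.
  rewrite !sqrt_sqrt by (unfold Rmax, Rmin; destruct Rle_dec; lra).
  assert (hk : 0 < / INR n * L) by (apply Rmult_lt_0_compat; [apply Rinv_0_lt_compat |]; lra).
  replace (Rmax a b * L / INR n) with (Rmax a b * (/ INR n * L)) by (unfold Rdiv; ring).
  replace (Rmin a b * L / INR n) with (Rmin a b * (/ INR n * L)) by (unfold Rdiv; ring).
  rewrite !Rmult_assoc. set (k := / INR n * L) in *.
  f_equal; unfold Rmax, Rmin; repeat destruct Rle_dec; nra.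
Qed.

Definition sum_ordered_pairs (f g : nat -> R) (n : nat) : R :=
  sum_f_R0 (fun i => sum_f_R0 (fun j => if Nat.leb i j then f i * g j else 0) n) n.

Lemma Pwin_diag_sum_ordered_pairs n p q :
  Pwin n n p q =
  sum_ordered_pairs (fun i => binom_pmf n i (Rmax p q)) (fun j => binom_pmf n j (Rmin p q)) n.
Proof. reflexivity. Qed.

Lemma tilted_product_le w s al be M x y i j : 0 <= w -> 0 < s -> (i <= j)%nat ->
  0 <= x <= al * poisson_weight (w * s) i -> 0 <= y <= be * poisson_weight (w / s) j ->
  0 <= al -> 0 <= be -> poisson_weight w j <= M ->
  x * y <= al * be * M * poisson_weight w i * (/ s) ^ (j - i).
Proof.
  intros hw hs hij hx hy hal hbe hM.
  apply Rle_trans with ((al * poisson_weight (w * s) i) * (be * poisson_weight (w / s) j));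
    [apply Rmult_le_compat; lra |].
  replace ((al * poisson_weight (w * s) i) * (be * poisson_weight (w / s) j))
    with (al * be * (poisson_weight (w * s) i * poisson_weight (w / s) j)) by ring.
  rewrite poisson_weight_tilt by assumption.
  assert (0 <= (/ s) ^ (j - i)) by (apply pow_le; left; now apply Rinv_0_lt_compat).
  pose proof (poisson_weight_ge_0 w i hw).
  replace (al * be * (poisson_weight w i * poisson_weight w j * (/ s) ^ (j - i)))
    with ((al * be * poisson_weight w i * (/ s) ^ (j - i)) * poisson_weight w j) by ring.
  replace (al * be * M * poisson_weight w i * (/ s) ^ (j - i))
    with ((al * be * poisson_weight w i * (/ s) ^ (j - i)) * M) by ring.
  apply Rmult_le_compat_l; [| exact hM].
  apply Rmult_le_pos; [apply Rmult_le_pos; [apply Rmult_le_pos |] |]; assumption.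
Qed.

Lemma sum_ordered_pairs_le_tilted (f g : nat -> R) n al be w s :
  1 <= w -> 1 < s -> 0 <= al -> 0 <= be ->
  (forall i, (i <= n)%nat -> 0 <= f i <= al * poisson_weight (w * s) i) ->
  (forall j, (j <= n)%nat -> 0 <= g j <= be * poisson_weight (w / s) j) ->
  sum_ordered_pairs f g n <= al * be * exp w * (3 * exp w / sqrt w) * (s / (s - 1)).
Proof.
  intros hw hs hal hbe hf hg.
  set (M := 3 * exp w / sqrt w).
  assert (hM : forall j, poisson_weight w j <= M)
    by (intros; now apply poisson_weight_le_exp_div_sqrt).
  assert (hpw : forall i, 0 <= poisson_weight w i) by (intros; apply poisson_weight_ge_0; lra).
  assert (hc : 0 <= al * be * M) by (pose proof (hM 0%nat); pose proof (hpw 0%nat);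
    apply Rmult_le_pos; [apply Rmult_le_pos |]; lra).
  assert (hinv : 0 <= / s < 1).
  { split; [left; apply Rinv_0_lt_compat; lra |].
    rewrite <- Rinv_1. apply Rinv_lt_contravar; lra. }
  replace (s / (s - 1)) with (/ (1 - / s)) by (field; lra).
  apply Rle_trans with
    (sum_f_R0 (fun i => al * be * M * / (1 - / s) * poisson_weight w i) n).
  - unfold sum_ordered_pairs. apply sum_Rle. intros i hi.
    replace (al * be * M * / (1 - / s) * poisson_weight w i)
      with (al * be * M * poisson_weight w i * / (1 - / s)) by ring.
    eapply Rle_trans; [| apply Rmult_le_compat_l;
      [apply Rmult_le_pos; [exact hc | apply hpw]
      | now apply (sum_geometric_from_le (/ s) i n)]].
    rewrite <- sum_f_R0_mult_l. apply sum_Rle. intros j hj.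
    destruct (Nat.leb i j) eqn:E; [| lra]. apply Nat.leb_le in E.
    apply (tilted_product_le w s); auto; lra.
  - rewrite sum_f_R0_mult_l.
    replace (al * be * exp w * M * / (1 - / s)) with (al * be * M * / (1 - / s) * exp w) by ring.
    apply Rmult_le_compat_l; [| apply exp_ge_taylor; lra].
    apply Rmult_le_pos; [exact hc | left; apply Rinv_0_lt_compat; lra].
Qed.

Lemma sum_ordered_pairs_ge_diag (f g : nat -> R) n m r :
  (forall i, 0 <= f i) -> (forall j, 0 <= g j) -> (m + r <= n)%nat ->
  sum_f_R0 (fun t => f (m + t)%nat * g (m + t)%nat) r <= sum_ordered_pairs f g n.
Proof.
  intros hf hg hmr.
  assert (hfg : forall i, 0 <= f i * g i) by (intros; apply Rmult_le_pos; auto).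
  apply Rle_trans with (sum_f_R0 (fun i => f i * g i) n).
  - eapply Rle_trans; [apply (sum_f_R0_shift_le (fun i => f i * g i)); exact hfg |].
    now apply sum_f_R0_le_N.
  - apply sum_Rle. intros i hi.
    apply Rle_trans with (if Nat.leb i i then f i * g i else 0); [rewrite Nat.leb_refl; lra |].
    apply (sum_f_R0_term_le (fun j => if Nat.leb i j then f i * g j else 0) n i).
    + intros j. destruct (Nat.leb i j); [apply Rmult_le_pos; auto | lra].
    + exact hi.
Qed.

(** * The winning probability at logarithmic scale *)

Section LogScale.

Variables (n : nat) (L sh sl Cc : R).
Hypotheses (hL : 0 < L) (hC : 1 <= Cc) (hCL : Cc <= L)
  (hn : 16 * Cc ^ 2 * L ^ 2 <= INR n)
  (hsl : 0 < sl) (hls : sl <= sh) (hlo : / Cc <= sl * sl) (hhi : sh * sh <= Cc).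

Let p := sh * sh * L / INR n.
Let q := sl * sl * L / INR n.

Lemma log_scale_n_pos : 0 < INR n.
Proof. assert (0 < Cc ^ 2 * L ^ 2) by (apply Rmult_lt_0_compat; apply pow_lt; lra). nra. Qed.

Lemma log_scale_CcL_bounds : 1 <= Cc * L /\ Cc * L / INR n <= 1 / 16.
Proof.
  pose proof log_scale_n_pos.
  assert (h1 : 1 <= Cc * L) by nra.
  split; [exact h1 |].
  assert (Cc * L <= Cc ^ 2 * L ^ 2) by (simpl; nra).
  apply Rmult_le_reg_r with (INR n); [lra |].
  unfold Rdiv. rewrite Rmult_assoc, Rinv_l by lra. lra.
Qed.

Lemma log_scale_np : INR n * p = sh * sh * L /\ INR n * q = sl * sl * L.
Proof. pose proof log_scale_n_pos. unfold p, q. split; field; lra. Qed.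

Lemma log_scale_pq_bounds : 0 <= q <= p /\ p <= Cc * L / INR n.
Proof.
  pose proof log_scale_n_pos. unfold p, q, Rdiv.
  assert (0 < / INR n) by now apply Rinv_0_lt_compat.
  assert (sl * sl <= sh * sh) by nra.
  repeat split.
  - apply Rmult_le_pos; [apply Rmult_le_pos |]; nra.
  - apply Rmult_le_compat_r; [lra | apply Rmult_le_compat_r; lra].
  - apply Rmult_le_compat_r; [lra | apply Rmult_le_compat_r; lra].
Qed.

Lemma log_scale_sh_sl_bounds : / Cc <= sh * sl <= Cc.
Proof. split; nra. Qed.

(* Splitting [n p e^p] and [n q e^q] as [w s] and [w / s] puts both binomials on the
   common Poisson scale [w]; then [s] governs the geometric decay of [P(Y = j, X = i)]
   in [j - i]. *)
Let w := L * (sh * sl) * exp ((p + q) / 2).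
Let s := sh / sl * exp ((p - q) / 2).

Lemma log_scale_tilt : w * s = INR n * p * exp p /\ w / s = INR n * q * exp q.
Proof.
  destruct log_scale_np as [ep eq]. rewrite ep, eq.
  pose proof (exp_pos ((p - q) / 2)).
  assert (e1 : exp p = exp ((p + q) / 2) * exp ((p - q) / 2))
    by (rewrite <- exp_plus; f_equal; field).
  assert (e2 : exp ((p + q) / 2) = exp q * exp ((p - q) / 2))
    by (rewrite <- exp_plus; f_equal; field).
  unfold w, s. split.
  - rewrite e1. field. lra.
  - rewrite e2. field. lra.
Qed.

Lemma log_scale_w_ge : 1 <= w /\ sqrt L / Cc <= sqrt w.
Proof.
  destruct log_scale_sh_sl_bounds. destruct log_scale_pq_bounds as [[hq hqp] _].
  assert (hLC : L / Cc <= w).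
  { apply Rle_trans with (L * (sh * sl)).
    - apply Rmult_le_compat_l; lra.
    - unfold w. rewrite <- (Rmult_1_r (L * (sh * sl))) at 1.
      apply Rmult_le_compat_l; [apply Rmult_le_pos; nra |].
      pose proof (exp_ineq1_le ((p + q) / 2)). lra. }
  assert (1 <= L / Cc).
  { apply Rmult_le_reg_r with Cc; [lra |]. unfold Rdiv. rewrite Rmult_assoc, Rinv_l; lra. }
  split; [lra |].
  apply Rle_trans with (sqrt (L / Cc)); [| now apply sqrt_le_1_alt].
  assert (sqrt Cc <= Cc).
  { rewrite <- (sqrt_square Cc) at 2 by lra. apply sqrt_le_1_alt. nra. }
  assert (0 < sqrt Cc) by (apply sqrt_lt_R0; lra).
  rewrite sqrt_div_alt by lra. apply Rmult_le_compat_l; [apply sqrt_pos |].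
  apply Rinv_le_contravar; lra.
Qed.

Lemma log_scale_s_ratio : 1 / 2 <= sh - sl -> 1 < s /\ s / (s - 1) <= 1 + 2 * Cc.
Proof.
  intros hgap. destruct log_scale_pq_bounds as [[hq hqp] _].
  assert (hsl_le : sl <= Cc) by nra.
  assert (h1 : 1 + / (2 * sl) <= sh / sl).
  { apply Rmult_le_reg_r with sl; [lra |]. unfold Rdiv.
    rewrite Rmult_assoc, Rinv_l, Rmult_plus_distr_r, Rinv_mult, Rmult_assoc, Rinv_l by lra.
    lra. }
  assert (h2 : sh / sl <= s).
  { unfold s. rewrite <- (Rmult_1_r (sh / sl)) at 1.
    apply Rmult_le_compat_l; [apply Rdiv_le_0_compat; lra |].
    pose proof (exp_ineq1_le ((p - q) / 2)). lra. }
  assert (0 < / (2 * sl)) by (apply Rinv_0_lt_compat; lra).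
  split; [lra |].
  replace (s / (s - 1)) with (1 + / (s - 1)) by (field; lra).
  enough (/ (s - 1) <= 2 * sl) by lra.
  replace (2 * sl) with (/ / (2 * sl)) by (field; lra).
  apply Rinv_le_contravar; lra.
Qed.

Lemma log_scale_exponent_le :
  - (INR n * p) - INR n * q + 2 * w <= - ((sh - sl) ^ 2 * L) + 1 / 4.
Proof.
  destruct log_scale_np as [ep eq]. rewrite ep, eq.
  destruct log_scale_sh_sl_bounds as [_ hshsl]. destruct log_scale_pq_bounds as [[hq hqp] hp].
  destruct log_scale_CcL_bounds as [hCL1 hk]. pose proof log_scale_n_pos.
  set (k := Cc * L / INR n) in *.
  pose proof (exp_le_one_add_twice ((p + q) / 2) ltac:(lra)).
  assert (hw : w <= L * (sh * sl) * (1 + 2 * k)).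
  { unfold w. apply Rmult_le_compat_l; [apply Rmult_le_pos; nra | lra]. }
  assert (L * (sh * sl) * k <= Cc * L * k)
    by (apply Rmult_le_compat_r; [unfold k; apply Rdiv_le_0_compat |]; nra).
  assert (Cc * L * k <= 1 / 16).
  { unfold k. replace (Cc * L * (Cc * L / INR n)) with (Cc ^ 2 * L ^ 2 / INR n) by (field; lra).
    apply Rmult_le_reg_r with (INR n); [lra |]. unfold Rdiv. rewrite Rmult_assoc, Rinv_l; lra. }
  nra.
Qed.

Lemma Pwin_log_scale_le : 1 / 2 <= sh - sl ->
  Pwin n n p q <= 6 * Cc * (1 + 2 * Cc) * exp (- ((sh - sl) ^ 2 * L)) / sqrt L.
Proof.
  intros hgap.
  destruct log_scale_pq_bounds as [[hq hqp] hp]. destruct log_scale_CcL_bounds as [_ hk].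
  destruct log_scale_tilt as [hup hdown]. destruct log_scale_w_ge as [hw hsw].
  destruct (log_scale_s_ratio hgap) as [hs hsr].
  rewrite Pwin_diag_sum_ordered_pairs, Rmax_left, Rmin_right by lra.
  eapply Rle_trans.
  { apply (sum_ordered_pairs_le_tilted _ _ n (exp (- (INR n * p))) (exp (- (INR n * q))) w s);
      try lra; try (left; apply exp_pos); intros i hi; (split; [apply binom_pmf_ge_0; lra |]).
    - rewrite hup. apply binom_pmf_le_poisson; [exact hi | lra].
    - rewrite hdown. apply binom_pmf_le_poisson; [exact hi | lra]. }
  assert (hsqL : 0 < sqrt L) by now apply sqrt_lt_R0.
  assert (0 < sqrt w) by (apply sqrt_lt_R0; lra).
  assert (hE : exp (- (INR n * p) - INR n * q + 2 * w) <= 2 * exp (- ((sh - sl) ^ 2 * L))).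
  { eapply Rle_trans; [apply exp_le_compat, log_scale_exponent_le |].
    rewrite exp_plus, Rmult_comm. apply Rmult_le_compat_r; [left; apply exp_pos |].
    pose proof (exp_le_one_add_twice (1 / 4) ltac:(lra)). lra. }
  replace (exp (- (INR n * p)) * exp (- (INR n * q)) * exp w * (3 * exp w / sqrt w) * (s / (s - 1)))
    with (3 * exp (- (INR n * p) - INR n * q + 2 * w) * / sqrt w * (s / (s - 1)))
    by (replace (- (INR n * p) - INR n * q + 2 * w) with (- (INR n * p) + - (INR n * q) + w + w)
          by ring; rewrite !exp_plus; field; split; lra).
  replace (6 * Cc * (1 + 2 * Cc) * exp (- ((sh - sl) ^ 2 * L)) / sqrt L)
    with (3 * (2 * exp (- ((sh - sl) ^ 2 * L))) * / (sqrt L / Cc) * (1 + 2 * Cc))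
    by (field; lra).
  pose proof (exp_pos (- (INR n * p) - INR n * q + 2 * w)).
  apply Rmult_le_compat; [| apply Rdiv_le_0_compat; lra | | exact hsr].
  - apply Rmult_le_pos; [lra | left; apply Rinv_0_lt_compat; lra].
  - apply Rmult_le_compat; [lra | left; apply Rinv_0_lt_compat; lra | lra |].
    apply Rinv_le_contravar; [apply Rdiv_lt_0_compat |]; lra.
Qed.

Let z := L * (sh * sl).

Lemma log_scale_z_bounds : 1 <= z <= Cc * L.
Proof.
  destruct log_scale_sh_sl_bounds. unfold z. split; [| nra].
  apply Rle_trans with (L * / Cc); [| apply Rmult_le_compat_l; lra].
  apply Rmult_le_reg_r with Cc; [lra |]. rewrite Rmult_assoc, Rinv_l; lra.
Qed.

Lemma log_scale_window m r : INR m <= z -> INR r <= sqrt z ->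
  (m + r <= n)%nat /\
  forall t, (t <= r)%nat -> INR (m + t) * INR (m + t) <= INR n / 4.
Proof.
  intros hm hr. destruct log_scale_z_bounds as [hz1 hzC]. destruct log_scale_CcL_bounds as [_ hk].
  pose proof log_scale_n_pos.
  assert (sqrt z <= z).
  { rewrite <- (sqrt_square z) at 2 by lra. apply sqrt_le_1_alt. nra. }
  assert (hmt : forall t, (t <= r)%nat -> INR (m + t) <= 2 * (Cc * L)).
  { intros t ht. rewrite plus_INR. assert (INR t <= INR r) by now apply le_INR. lra. }
  split.
  - apply INR_le. specialize (hmt r (le_n _)).
    enough (2 * (Cc * L) <= INR n) by lra.
    apply Rmult_le_reg_r with (/ INR n); [now apply Rinv_0_lt_compat |].
    rewrite Rinv_r by lra. unfold Rdiv in hk. lra.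
  - intros t ht. specialize (hmt t ht). pose proof (pos_INR (m + t)).
    assert (INR (m + t) * INR (m + t) <= (2 * (Cc * L)) * (2 * (Cc * L))) by nra.
    lra.
Qed.

Lemma log_scale_n_sq_le : INR n * p ^ 2 <= / 4 /\ INR n * q ^ 2 <= / 4.
Proof.
  destruct log_scale_pq_bounds as [[hq hqp] hp]. destruct log_scale_CcL_bounds as [hCL1 hk].
  pose proof log_scale_n_pos.
  assert (h : INR n * p ^ 2 <= / 4).
  { apply Rle_trans with (INR n * (Cc * L / INR n) ^ 2).
    - apply Rmult_le_compat_l; [lra | apply pow_incr; lra].
    - replace (INR n * (Cc * L / INR n) ^ 2) with (Cc ^ 2 * L ^ 2 / INR n) by (field; lra).
      apply Rmult_le_reg_r with (INR n); [lra |].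
      unfold Rdiv. rewrite Rmult_assoc, Rinv_l; lra. }
  split; [exact h |].
  assert (q ^ 2 <= p ^ 2) by (apply pow_incr; lra). nra.
Qed.

Lemma log_scale_diag_term_ge k : (k <= n)%nat -> INR k * INR k <= INR n / 4 ->
  exp (- (INR n * p)) * exp (- (INR n * q)) * poisson_weight z k ^ 2 / 4
  <= binom_pmf n k p * binom_pmf n k q.
Proof.
  intros hk hkk.
  destruct log_scale_pq_bounds as [[hq hqp] hp]. destruct log_scale_CcL_bounds as [_ hsc].
  destruct log_scale_n_sq_le as [hnp hnq]. destruct log_scale_np as [ep eq].
  assert (hn0 : (0 < n)%nat) by (apply INR_lt; simpl; apply log_scale_n_pos).
  pose proof (binom_pmf_ge_poisson n k p hn0 hk ltac:(lra) hkk hnp) as h1.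
  pose proof (binom_pmf_ge_poisson n k q hn0 hk ltac:(lra) hkk hnq) as h2.
  assert (ez : poisson_weight (INR n * p) k * poisson_weight (INR n * q) k
               = poisson_weight z k ^ 2).
  { rewrite ep, eq. unfold poisson_weight, z. rewrite !Rpow_mult_distr.
    pose proof (INR_fact_lt_0 k). field. lra. }
  assert (hpos : forall r, 0 <= r -> 0 <= exp (- (INR n * r)) * poisson_weight (INR n * r) k / 2).
  { intros r hr. apply Rdiv_le_0_compat; [| lra].
    apply Rmult_le_pos; [left; apply exp_pos | apply poisson_weight_ge_0].
    apply Rmult_le_pos; [apply pos_INR | exact hr]. }
  eapply Rle_trans; [| apply Rmult_le_compat; [apply hpos | apply hpos | exact h1 | exact h2]];
    [| lra | lra].
  right. rewrite <- ez. field.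
Qed.

Lemma Pwin_log_scale_ge :
  exp (- ((sh - sl) ^ 2 * L)) / (1764 * Cc * sqrt L) <= Pwin n n p q.
Proof.
  destruct log_scale_pq_bounds as [[hq hqp] hp]. destruct log_scale_z_bounds as [hz1 hzC].
  destruct log_scale_np as [ep eq]. destruct log_scale_CcL_bounds as [_ hk].
  assert (hsz : 1 <= sqrt z) by (rewrite <- sqrt_1; now apply sqrt_le_1_alt).
  destruct (nfloor_ex z ltac:(lra)) as [m hm].
  destruct (nfloor_ex (sqrt z) ltac:(lra)) as [r hr].
  destruct (log_scale_window m r ltac:(lra) ltac:(lra)) as [hmr hkk].
  set (E := exp (- (INR n * p)) * exp (- (INR n * q))).
  assert (hE : E * exp z ^ 2 = exp (- ((sh - sl) ^ 2 * L))).
  { unfold E. simpl pow. rewrite Rmult_1_r, <- !exp_plus. f_equal.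
    rewrite ep, eq. unfold z. ring. }
  assert (hE0 : 0 < E) by (unfold E; apply Rmult_lt_0_compat; apply exp_pos).
  rewrite Pwin_diag_sum_ordered_pairs, Rmax_left, Rmin_right by lra.
  eapply Rle_trans; [| apply (sum_ordered_pairs_ge_diag _ _ n m r);
    [intros; apply binom_pmf_ge_0; lra | intros; apply binom_pmf_ge_0; lra | exact hmr]].
  eapply Rle_trans; [| apply sum_Rle; intros t ht;
    apply (log_scale_diag_term_ge (m + t)); [lia | now apply hkk]].
  rewrite (sum_eq _ (fun t => E / 4 * poisson_weight z (m + t) ^ 2))
    by (intros; unfold E, Rdiv; ring).
  rewrite sum_f_R0_mult_l.
  assert (hsqz : sqrt z <= Cc * sqrt L).
  { assert (sqrt Cc <= Cc).
    { rewrite <- (sqrt_square Cc) at 2 by lra. apply sqrt_le_1_alt. nra. }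
    apply Rle_trans with (sqrt (Cc * L)); [now apply sqrt_le_1_alt |].
    rewrite sqrt_mult by lra. apply Rmult_le_compat_r; [apply sqrt_pos | lra]. }
  apply Rle_trans with (E / 4 * (exp z ^ 2 / (441 * sqrt z)));
    [| apply Rmult_le_compat_l; [lra | now apply poisson_window_sq_ge]].
  rewrite <- hE.
  assert (0 < E * exp z ^ 2) by (apply Rmult_lt_0_compat; [lra | apply pow_lt, exp_pos]).
  replace (E / 4 * (exp z ^ 2 / (441 * sqrt z))) with (E * exp z ^ 2 / (1764 * sqrt z))
    by (field; lra).
  unfold Rdiv. apply Rmult_le_compat_l; [lra |].
  apply Rinv_le_contravar; nra.
Qed.

End LogScale.

(** * Asymptotics *)

Lemma sqrt_Rmax_sub_sqrt_Rmin_sq a b : 0 < a -> 0 < b ->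
  (sqrt (Rmax a b) - sqrt (Rmin a b)) ^ 2 = a + b - 2 * sqrt (a * b).
Proof.
  intros ha hb.
  assert (e : Rmax a b * Rmin a b = a * b /\ Rmax a b + Rmin a b = a + b)
    by (unfold Rmax, Rmin; destruct Rle_dec; split; ring).
  assert (0 < Rmin a b) by (unfold Rmin; destruct Rle_dec; lra).
  replace ((sqrt (Rmax a b) - sqrt (Rmin a b)) ^ 2) with
    (sqrt (Rmax a b) * sqrt (Rmax a b) + sqrt (Rmin a b) * sqrt (Rmin a b)
     - 2 * (sqrt (Rmax a b) * sqrt (Rmin a b))) by ring.
  assert (0 < Rmax a b) by (unfold Rmax; destruct Rle_dec; lra).
  rewrite !sqrt_sqrt by lra. rewrite <- sqrt_mult by lra.
  destruct e as [-> ->]. ring.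
Qed.

Lemma exp_opp_exponent d L : 0 < L ->
  exp (- ((d - 1) * L + / 2 * ln L)) = exp L * exp (- (d * L)) / sqrt L.
Proof.
  intros hL. assert (0 < sqrt L) by now apply sqrt_lt_R0.
  replace (- ((d - 1) * L + / 2 * ln L)) with (L + - (d * L) + - ln (sqrt L))
    by (rewrite ln_sqrt by lra; field).
  rewrite !exp_plus, (exp_Ropp (ln (sqrt L))), exp_ln by lra. field. lra.
Qed.

Lemma half_le_of_exponent_ge_0 d L : 0 < L -> 0 <= (d - 1) * L + / 2 * ln L -> 1 / 2 <= d.
Proof.
  intros hL hQ. pose proof (ln_le_sub_1 L hL).
  destruct (Rle_lt_dec (1 / 2) d) as [h | h]; [exact h |].
  assert ((d - 1) * L < - L / 2) by nra. lra.
Qed.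

Lemma eventually_ln_large Cc : 1 <= Cc -> exists N, forall n, (N <= n)%nat ->
  1 <= INR n /\ Cc <= ln (INR n) /\ 16 * Cc ^ 2 * ln (INR n) ^ 2 <= INR n.
Proof.
  intros hC.
  set (B := Rmax (exp Cc) (65536 * Cc ^ 4)).
  destruct (nfloor_ex B) as [N hN].
  { apply Rle_trans with (exp Cc); [left; apply exp_pos | apply Rmax_l]. }
  exists (S N). intros n hn.
  assert (hnB : B <= INR n).
  { apply Rle_trans with (INR (S N)); [rewrite S_INR; lra | now apply le_INR]. }
  assert (he : exp Cc <= INR n) by (eapply Rle_trans; [apply Rmax_l | exact hnB]).
  assert (hc4 : 65536 * Cc ^ 4 <= INR n) by (eapply Rle_trans; [apply Rmax_r | exact hnB]).
  pose proof (exp_ineq1_le Cc).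
  assert (h1 : 1 <= INR n) by lra.
  split; [exact h1 | split].
  - rewrite <- (ln_exp Cc). apply ln_le; [apply exp_pos | exact he].
  - pose proof (ln_sq_le _ h1).
    assert (hss : sqrt (INR n) * sqrt (INR n) = INR n) by (apply sqrt_sqrt; lra).
    assert (256 * Cc ^ 2 <= sqrt (INR n)).
    { apply Rsqr_incr_0_var; [unfold Rsqr; rewrite hss; nra | apply sqrt_pos]. }
    apply Rle_trans with (16 * Cc ^ 2 * (16 * sqrt (INR n))); [| nra].
    simpl pow at 2. rewrite Rmult_1_r. apply Rmult_le_compat_l; nra.
Qed.

Lemma is_lim_seq_0_iff_p_infty (X Q : nat -> R) c K : 0 < c -> 0 < K ->
  (exists N, forall n, (N <= n)%nat ->
     c * exp (- Q n) <= X n /\ (0 <= Q n -> X n <= K * exp (- Q n))) ->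
  is_lim_seq X 0 <-> is_lim_seq Q p_infty.
Proof.
  intros hc hK [N hN]. rewrite <- !is_lim_seq_spec. split.
  - intros hX M.
    destruct (hX (mkposreal _ (Rmult_lt_0_compat _ _ hc (exp_pos (- M))))) as [N2 hN2].
    exists (Nat.max N N2). intros n hn. simpl in hN2.
    destruct (hN n ltac:(lia)) as [hl _].
    specialize (hN2 n ltac:(lia)). rewrite Rminus_0_r in hN2.
    apply Rabs_def2 in hN2.
    assert (hexp : exp (- Q n) < exp (- M)) by (apply Rmult_lt_reg_l with c; lra).
    apply exp_lt_inv in hexp. lra.
  - intros hQ eps.
    destruct (hQ (Rmax 0 (ln (K / eps)))) as [N2 hN2].
    exists (Nat.max N N2). intros n hn.
    specialize (hN2 n ltac:(lia)).
    assert (hQ0 : 0 <= Q n) by (pose proof (Rmax_l 0 (ln (K / eps))); lra).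
    destruct (hN n ltac:(lia)) as [hl hu]. specialize (hu hQ0).
    pose proof (cond_pos eps).
    assert (hexp : exp (- Q n) < eps / K).
    { replace (eps / K) with (exp (- ln (K / eps)))
        by (rewrite exp_Ropp, exp_ln by (apply Rdiv_lt_0_compat; lra); field; lra).
      apply exp_increasing. pose proof (Rmax_r 0 (ln (K / eps))). lra. }
    assert (0 <= X n) by (pose proof (exp_pos (- Q n)); nra).
    rewrite Rminus_0_r, Rabs_right by lra.
    apply Rle_lt_trans with (K * exp (- Q n)); [exact hu |].
    replace (pos eps) with (K * (eps / K)) by (field; lra).
    now apply Rmult_lt_compat_l.
Qed.

Lemma n_Pdiag_bounds a b Cc n : 0 < a -> 0 < b ->
  / Cc <= a <= Cc -> / Cc <= b <= Cc -> 1 <= Cc ->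
  1 <= INR n -> Cc <= ln (INR n) -> 16 * Cc ^ 2 * ln (INR n) ^ 2 <= INR n ->
  let X := INR n * Pdiag n (a * / INR n * ln (INR n)) (b * / INR n * ln (INR n)) in
  let Q := (a + b - 2 * sqrt (a * b) - 1) * ln (INR n) + / 2 * ln (ln (INR n)) in
  / (1764 * Cc) * exp (- Q) <= X /\ (0 <= Q -> X <= 6 * Cc * (1 + 2 * Cc) * exp (- Q)).
Proof.
  intros ha hb hA hB hC hn1 hL hn X Q.
  set (L := ln (INR n)) in *.
  assert (hL0 : 0 < L) by lra.
  assert (hlohi : / Cc <= Rmin a b <= Rmax a b /\ Rmax a b <= Cc)
    by (unfold Rmax, Rmin; destruct Rle_dec; lra).
  set (sh := sqrt (Rmax a b)). set (sl := sqrt (Rmin a b)).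
  assert (hCinv : 0 < / Cc) by (apply Rinv_0_lt_compat; lra).
  assert (esh : sh * sh = Rmax a b) by (apply sqrt_sqrt; lra).
  assert (esl : sl * sl = Rmin a b) by (apply sqrt_sqrt; lra).
  assert (hsl : 0 < sl) by (apply sqrt_lt_R0; lra).
  assert (hls : sl <= sh) by (apply sqrt_le_1_alt; lra).
  assert (eX : X = INR n * Pwin n n (sh * sh * L / INR n) (sl * sl * L / INR n))
    by (unfold X; rewrite Pdiag_scaled by lra; reflexivity).
  assert (eQ : exp (- Q) = INR n * exp (- ((sh - sl) ^ 2 * L)) / sqrt L).
  { unfold Q, sh, sl. rewrite <- sqrt_Rmax_sub_sqrt_Rmin_sq by lra.
    fold L. rewrite exp_opp_exponent by lra. unfold L. rewrite exp_ln by lra. reflexivity. }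
  assert (hsqL : 0 < sqrt L) by now apply sqrt_lt_R0.
  rewrite eX, eQ. split.
  - pose proof (Pwin_log_scale_ge n L sh sl Cc hL0 hC hL hn hsl hls ltac:(lra) ltac:(lra)).
    apply Rle_trans with (INR n * (exp (- ((sh - sl) ^ 2 * L)) / (1764 * Cc * sqrt L)));
      [right; field; lra | apply Rmult_le_compat_l; lra].
  - intros hQ.
    assert (hd : 1 / 2 <= (sh - sl) ^ 2).
    { apply (half_le_of_exponent_ge_0 _ L hL0).
      unfold Q, sh, sl in hQ. rewrite <- sqrt_Rmax_sub_sqrt_Rmin_sq in hQ by lra. exact hQ. }
    assert (hgap : 1 / 2 <= sh - sl) by (simpl in hd; nra).
    pose proof (Pwin_log_scale_le n L sh sl Cc hL0 hC hL hn hsl hls ltac:(lra) ltac:(lra) hgap).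
    apply Rle_trans
      with (INR n * (6 * Cc * (1 + 2 * Cc) * exp (- ((sh - sl) ^ 2 * L)) / sqrt L));
      [apply Rmult_le_compat_l; lra | right; field; lra].
Qed.

Theorem proposition2p8 (a b : nat -> R)
  (ha : forall n, 0 < a n) (hb : forall n, 0 < b n)
  (hC : exists C : R, 0 < C /\ exists N : nat, forall n, (N <= n)%nat ->
          / C <= a n <= C /\ / C <= b n <= C) :
  let p := fun n : nat => a n * / INR n * ln (INR n) in
  let q := fun n : nat => b n * / INR n * ln (INR n) in
  is_lim_seq (fun n : nat => INR n * Pdiag n (p n) (q n)) 0
  <->
  is_lim_seq (fun n : nat =>
      (a n + b n - 2 * sqrt (a n * b n) - 1) * ln (INR n)
      + / 2 * ln (ln (INR n))) p_infty.
Proof.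
  intros p q. destruct hC as [Cc [hC0 [N hN]]].
  assert (hC1 : 1 <= Cc).
  { destruct (hN N (le_n _)) as [[h1 h2] _].
    destruct (Rle_lt_dec 1 Cc) as [h | h]; [exact h |].
    assert (1 < / Cc) by (rewrite <- Rinv_1; apply Rinv_lt_contravar; lra). lra. }
  destruct (eventually_ln_large Cc hC1) as [N1 hN1].
  apply (is_lim_seq_0_iff_p_infty _ _ (/ (1764 * Cc)) (6 * Cc * (1 + 2 * Cc))).
  - apply Rinv_0_lt_compat. lra.
  - apply Rmult_lt_0_compat; lra.
  - exists (Nat.max N N1). intros n hn.
    destruct (hN n ltac:(lia)) as [hA hB]. destruct (hN1 n ltac:(lia)) as [h1 [h2 h3]].
    exact (n_Pdiag_bounds (a n) (b n) Cc n (ha n) (hb n) hA hB hC1 h1 h2 h3).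
Qed.
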